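(* Let $\rho$ be a state of a system with Hamiltonian $H$ and Gibbs state $\gamma$, and let $\epsilon\in[0,1)$. Suppose there exist a Hamiltonian $\tilde H$ (with Gibbs state $\tilde\gamma$), thermal operations $\mathcal{E}_1,\dots,\mathcal{E}_M$ from $H$ to $\tilde H$, and a POVM $\{\Pi_i\}_{i=1}^M$ on the output system such that $\frac1M\sum_{i=1}^M\mathrm{tr}[\mathcal{E}_i(\rho)\Pi_i]\ge1-\epsilon$. Then $$\log M\le D_H^{\epsilon}(\rho\|\gamma).$$
   Context: Fix $\beta>0$; logarithms are natural. Gibbs state of a Hamiltonian $K$: $e^{-\beta K}/\mathrm{tr}\,e^{-\beta K}$. A thermal operation from a system with Hamiltonian $K$ to one with Hamiltonian $K'$ is a channel $\mathcal{E}(\rho)=\mathrm{tr}_{E'}[U(\rho\otimes\gamma_E)U^\dagger]$ with an environment $E$ of Hamiltonian $H_E$ in its Gibbs state $\gamma_E$, a unitary $U$ commuting with $K\otimes\mathbb{1}+\mathbb{1}\otimes H_E$, and $E'$ a subsystem whose complement is the output system with Hamiltonian $K'$. The hypothesis testing relative entropy is $D_H^\epsilon(\rho\|\sigma)=-\log\inf\{\mathrm{tr}(Q\sigma):0\le Q\le\mathbb{1},\ \mathrm{tr}(Q\rho)\ge1-\epsilon\}$. *)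

From HB Require Import structures.
From mathcomp Require Import all_boot all_order all_algebra.
From mathcomp Require Import complex mxtens.
From mathcomp Require Import classical_sets boolp reals ereal topology normedtype sequences exp.

Set Implicit Arguments.
Unset Strict Implicit.
Unset Printing Implicit Defensive.

Import Order.TTheory GRing.Theory Num.Theory.
Local Open Scope ring_scope.
Local Open Scope classical_set_scope.

Section QDefs.
Variable R : realType.
Local Notation C := (R[i]).

Definition adj {m n} (A : 'M[C]_(m, n)) : 'M[C]_(n, m) := (map_mx Num.conj A)^T.

Definition is_herm {n} (A : 'M[C]_n) : Prop := adj A = A.

Definition is_unitary_mx {n} (U : 'M[C]_n) : Prop :=
  U *m adj U = 1%:M /\ adj U *m U = 1%:M.

Definition psd {n} (A : 'M[C]_n) : Prop :=
  forall v : 'cV[C]_n, 0 <= (adj v *m A *m v) 0 0.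

Definition state {n} (rho : 'M[C]_n) : Prop := psd rho /\ \tr rho = 1.

(* Gibbs state of a Hamiltonian K at inverse temperature beta:
   gamma = e^{-beta K} / tr e^{-beta K}, with the matrix exponential given
   by the spectral decomposition K = V diag(E) V^dagger. *)
Definition gibbs (beta : R) {n} (K gamma : 'M[C]_n) : Prop :=
  exists (V : 'M[C]_n) (E : 'I_n -> R),
    is_unitary_mx V /\
    K = V *m diag_mx (\row_i (E i)%:C%C) *m adj V /\
    gamma = V *m diag_mx (\row_i ((expR (- beta * E i)
                 / \sum_(j < n) expR (- beta * E j))%:C%C)) *m adj V.

Definition ptrace2 {k e} (X : 'M[C]_(k * e)) : 'M[C]_k :=
  \matrix_(i, j) \sum_(l < e) X (mxtens_index (i, l)) (mxtens_index (j, l)).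

(* The total space S (x) E is
   identified with S' (x) E' through U (an energy-preserving is_unitary_mx):
   U (K (x) 1 + 1 (x) H_E) = (K' (x) 1 + 1 (x) H_E') U. *)
Definition thermal_op (beta : R) {n k} (K : 'M[C]_n) (K' : 'M[C]_k)
    (Ch : 'M[C]_n -> 'M[C]_k) : Prop :=
  exists (e e' : nat) (HE : 'M[C]_e) (gE : 'M[C]_e) (HE' : 'M[C]_e')
         (U : 'M[C]_(k * e', n * e)),
    is_herm HE /\ is_herm HE' /\ gibbs beta HE gE /\
    U *m adj U = 1%:M /\ adj U *m U = 1%:M /\
    U *m (K *t (1%:M : 'M[C]_e) + (1%:M : 'M[C]_n) *t HE)
      = (K' *t (1%:M : 'M[C]_e') + (1%:M : 'M[C]_k) *t HE') *m U /\
    forall rho : 'M[C]_n, Ch rho = ptrace2 (U *m (rho *t gE) *m adj U).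

Definition effect {n} (Q : 'M[C]_n) : Prop := psd Q /\ psd (1%:M - Q).

Definition povm {k M} (Pi : 'I_M -> 'M[C]_k) : Prop :=
  (forall i, psd (Pi i)) /\ \sum_(i < M) Pi i = 1%:M.

Definition DH (eps : R) {n} (rho sigma : 'M[C]_n) : R :=
  - ln (inf [set x : R | exists Q : 'M[C]_n,
              effect Q /\ ((1 - eps)%:C%C <= \tr (Q *m rho)) /\
              x = complex.Re (\tr (Q *m sigma))]).

End QDefs.

(* A thermal operation E maps the Gibbs state gamma to the Gibbs state gamma~:
   the energy-preserving unitary U intertwines the total Hamiltonians, hence
   also exp(-beta (H (x) 1 + 1 (x) H_E)), which is proportional to
   gamma (x) gamma_E; tracing out the environment leaves a multiple of gamma~,
   and trace preservation makes the multiple 1.  In the Heisenberg picture,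
   Q := (1/M) sum_i E_i^dagger(Pi_i) is a test with tr(Q rho) >= 1 - eps and
   tr(Q gamma) = (1/M) sum_i tr(gamma~ Pi_i) <= 1/M, so D_H^eps(rho||gamma) >= log M. *)

From HB Require Import structures.
From mathcomp Require Import all_boot all_order all_algebra.
From mathcomp Require Import complex mxtens.
From mathcomp Require Import classical_sets boolp reals ereal topology normedtype sequences exp.
From mathcomp Require Import ring.
From mathcomp Require spectral.

Import Order.TTheory GRing.Theory Num.Theory.
Local Open Scope ring_scope.

Set Implicit Arguments.
Unset Strict Implicit.
Unset Printing Implicit Defensive.

Lemma sum_mxtens (V : nmodType) m n (F : 'I_(m * n) -> V) :
  \sum_p F p = \sum_i \sum_l F (mxtens_index (i, l)).
Proof.
rewrite pair_bigA /= (reindex (@mxtens_index m n)) /=; last first.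
  by exists (@mxtens_unindex m n) => x _; rewrite ?mxtens_indexK ?mxtens_unindexK.
by apply: eq_bigr => -[i l].
Qed.

Lemma mxtens_index_eq m n (i j : 'I_m) (l l' : 'I_n) :
  (mxtens_index (i, l) == mxtens_index (j, l')) = (i == j) && (l == l').
Proof. by rewrite (inj_eq (can_inj (@mxtens_indexK m n))) xpair_eqE. Qed.

Section TensorAlgebra.
Variable R : comPzRingType.

Lemma tensmx11 m n : (1%:M : 'M[R]_m) *t (1%:M : 'M[R]_n) = 1%:M.
Proof.
apply/matrixP => p q.
case: (mxtens_indexP p) => i l; case: (mxtens_indexP q) => j l'.
rewrite tensmxE !mxE mxtens_index_eq.
by case: (i == j); case: (l == l'); rewrite ?mulr1 ?mulr0.
Qed.

Lemma tensmx_diag m n (d1 : 'rV[R]_m) (d2 : 'rV[R]_n) :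
  diag_mx d1 *t diag_mx d2
  = diag_mx (\row_p (d1 0 (mxtens_unindex p).1 * d2 0 (mxtens_unindex p).2)).
Proof.
apply/matrixP => p q.
case: (mxtens_indexP p) => i l; case: (mxtens_indexP q) => j l'.
rewrite tensmxE !mxE mxtens_indexK mxtens_index_eq.
by case: (i == j); case: (l == l'); rewrite ?mulr1n ?mulr0n ?mulr0 ?mul0r.
Qed.

Lemma tensmxZ m n p q (a b : R) (A : 'M[R]_(m, n)) (B : 'M[R]_(p, q)) :
  (a *: A) *t (b *: B) = (a * b) *: (A *t B).
Proof. by apply/matrixP => x y; rewrite !mxE mulrACA. Qed.

Lemma tensmxBl m n p q (A B : 'M[R]_(m, n)) (D : 'M[R]_(p, q)) :
  (A - B) *t D = A *t D - B *t D.
Proof. by apply/matrixP => x y; rewrite !mxE mulrBl. Qed.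

Lemma mxtrace_tens m n (A : 'M[R]_m) (B : 'M[R]_n) : \tr (A *t B) = \tr A * \tr B.
Proof.
rewrite /mxtrace sum_mxtens big_distrl /=; apply: eq_bigr => i _.
by rewrite big_distrr /=; apply: eq_bigr => l _; rewrite tensmxE.
Qed.

Lemma sum_mul_delta n (F : 'I_n -> R) i : \sum_j F j * (j == i)%:R = F i.
Proof.
by rewrite (bigD1 i) //= eqxx mulr1 big1 ?addr0 // => j /negbTE ->; rewrite mulr0.
Qed.

Lemma sum_delta_mul n (F : 'I_n -> R) i : \sum_j (i == j)%:R * F j = F i.
Proof.
by rewrite -[RHS](sum_mul_delta F i); apply: eq_bigr => j _; rewrite mulrC eq_sym.
Qed.

End TensorAlgebra.

Section Adjoint.
Variable R : realType.
Local Notation C := R[i].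

Lemma adjmxE m n (A : 'M[C]_(m, n)) i j : adj A i j = (A j i)^*.
Proof. by rewrite /adj !mxE. Qed.

Lemma adjmxK m n (A : 'M[C]_(m, n)) : adj (adj A) = A.
Proof. by apply/matrixP => i j; rewrite !adjmxE conjCK. Qed.

Lemma adjmx_mul m n p (A : 'M[C]_(m, n)) (B : 'M[C]_(n, p)) :
  adj (A *m B) = adj B *m adj A.
Proof.
apply/matrixP => i j; rewrite adjmxE !mxE rmorph_sum; apply: eq_bigr => l _.
by rewrite !adjmxE rmorphM mulrC.
Qed.

Lemma adjmxD m n (A B : 'M[C]_(m, n)) : adj (A + B) = adj A + adj B.
Proof. by apply/matrixP => i j; rewrite !adjmxE !mxE rmorphD. Qed.

Lemma adjmxZ m n (c : C) (A : 'M[C]_(m, n)) : adj (c *: A) = c^* *: adj A.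
Proof. by apply/matrixP => i j; rewrite !adjmxE !mxE rmorphM. Qed.

Lemma adjmx_tens m n p q (A : 'M[C]_(m, n)) (B : 'M[C]_(p, q)) :
  adj (A *t B) = adj A *t adj B.
Proof. by apply/matrixP => i j; rewrite /adj !mxE rmorphM. Qed.

Lemma adjmx_delta n (c : 'I_n) : adj (delta_mx c 0 : 'cV[C]_n) = delta_mx 0 c.
Proof.
apply/matrixP => i j; rewrite adjmxE !mxE.
by case: (i == 0); case: (j == c); rewrite /= ?conjC1 ?conjC0.
Qed.

Lemma unitary_tens m n (V : 'M[C]_m) (W : 'M[C]_n) :
  is_unitary_mx V -> is_unitary_mx W -> is_unitary_mx (V *t W).
Proof.
by move=> [hVr hVl] [hWr hWl]; rewrite /is_unitary_mx adjmx_tens !tensmx_mul hVr hVl hWr hWl !tensmx11.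
Qed.

End Adjoint.

Section PositiveSemidefinite.
Variable R : realType.
Local Notation C := R[i].

Lemma psd0 n : psd (0 : 'M[C]_n).
Proof. by move=> v; rewrite mulmx0 mul0mx mxE. Qed.

Lemma psd1 n : psd (1%:M : 'M[C]_n).
Proof.
move=> v; rewrite mulmx1 mxE; apply: sumr_ge0 => i _.
by rewrite adjmxE mulrC mul_conjC_ge0.
Qed.

Lemma psdD n (A B : 'M[C]_n) : psd A -> psd B -> psd (A + B).
Proof. by move=> hA hB v; rewrite mulmxDr mulmxDl mxE addr_ge0. Qed.

Lemma psdZ n (c : C) (A : 'M[C]_n) : 0 <= c -> psd A -> psd (c *: A).
Proof. by move=> hc hA v; rewrite -scalemxAr -scalemxAl mxE mulr_ge0. Qed.

Lemma psd_sum n I (r : seq I) (P : pred I) (F : I -> 'M[C]_n) :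
  (forall x, P x -> psd (F x)) -> psd (\sum_(x <- r | P x) F x).
Proof. by move=> h; elim/big_ind: _ => //; [exact: psd0 | exact: psdD]. Qed.

Lemma psd_adj_conj n m (A : 'M[C]_n) (Y : 'M[C]_(n, m)) :
  psd A -> psd (adj Y *m A *m Y).
Proof. by move=> hA v; have := hA (Y *m v); rewrite adjmx_mul !mulmxA. Qed.

Lemma psd_diag_ge0 n (A : 'M[C]_n) c : psd A -> 0 <= A c c.
Proof.
by move=> /(_ (delta_mx c 0)); rewrite adjmx_delta -rowE -colE !mxE.
Qed.

Lemma quadformE n (A : 'M[C]_n) (v : 'cV[C]_n) :
  (adj v *m A *m v) 0 0 = \sum_p \sum_q (v p 0)^* * A p q * v q 0.
Proof.
rewrite mxE; under eq_bigr do rewrite mxE big_distrl /=.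
by rewrite exchange_big /=; apply: eq_bigr => p _; apply: eq_bigr => q _; rewrite adjmxE.
Qed.

Lemma quadform_delta2 n (A : 'M[C]_n) i j (a b : C) :
  let v : 'cV[C]_n := a *: delta_mx i 0 + b *: delta_mx j 0 in
  (adj v *m A *m v) 0 0
  = a^* * a * A i i + a^* * b * A i j + b^* * a * A j i + b^* * b * A j j.
Proof.
rewrite /= adjmxD !adjmxZ !adjmx_delta.
have E x y : (delta_mx 0 x : 'rV[C]_n) *m A *m delta_mx y 0 = (A x y)%:M.
  by apply/matrixP => p q; rewrite [p]ord1 [q]ord1 -rowE -colE !mxE eqxx.
rewrite !mulmxDl !mulmxDr -!scalemxAl -!scalemxAr !E !mxE !eqxx !mulr1n.
by rewrite -!mulrA; ring.
Qed.

(* Polarization: testing the form on [e_i + e_j] and [e_i + 'i e_j] shows that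
   [A i j + A j i] and ['i (A i j - A j i)] are real. *)
Lemma psd_adj n (A : 'M[C]_n) : psd A -> adj A = A.
Proof.
move=> hA; apply/matrixP => i j; rewrite adjmxE.
have realA c : A c c \is Num.real by exact/ger0_real/psd_diag_ge0.
have real_norm (a : C) : a^* * a \is Num.real by rewrite mulrC ger0_real ?mul_conjC_ge0.
have real_form a b : a^* * b * A i j + b^* * a * A j i \is Num.real.
  have := ger0_real (hA (a *: delta_mx i 0 + b *: delta_mx j 0)).
  rewrite quadform_delta2 => hq.
  have -> : a^* * b * A i j + b^* * a * A j i
      = (a^* * a * A i i + a^* * b * A i j + b^* * a * A j i + b^* * b * A j j)
        - (a^* * a * A i i + b^* * b * A j j) by ring.
  by apply: rpredB => //; apply: rpredD; apply: rpredM; rewrite ?realA ?real_norm.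
have hsum : (A i j + A j i)^* = A i j + A j i.
  by apply/CrealP; have := real_form 1 1; rewrite conjC1 !mul1r.
have hdiff : (A i j - A j i)^* = A j i - A i j.
  have /CrealP := real_form 1 'i.
  rewrite conjC1 conjCi mul1r mulr1 mulNr -mulrBr rmorphM /= conjCi.
  move=> /(congr1 (fun z => 'i * z)); rewrite mulNr mulrN !mulrA -expr2 sqrCi.
  by rewrite !mulN1r opprK => ->; rewrite opprB.
have : ((A j i)^* - A i j) *+ 2 = 0.
  move: hsum hdiff; rewrite rmorphD rmorphB => hsum hdiff.
  have -> : ((A j i)^* - A i j) *+ 2
      = ((A i j)^* + (A j i)^* - (A i j + A j i)) - ((A i j)^* - (A j i)^* - (A j i - A i j))
    by rewrite mulr2n; ring.
  by rewrite hsum hdiff !subrr.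
by move/eqP; rewrite -mulr_natr mulf_eq0 pnatr_eq0 orbF subr_eq0 => /eqP.
Qed.

End PositiveSemidefinite.

Section PartialTrace.
Variable R : realType.
Local Notation C := R[i].

Lemma ptrace2_tens k e (A : 'M[C]_k) (B : 'M[C]_e) : ptrace2 (A *t B) = \tr B *: A.
Proof.
apply/matrixP => i j; rewrite !mxE /mxtrace big_distrl /=.
by apply: eq_bigr => l _; rewrite tensmxE mulrC.
Qed.

Lemma ptrace2Z k e (c : C) (Z : 'M[C]_(k * e)) : ptrace2 (c *: Z) = c *: ptrace2 Z.
Proof.
by apply/matrixP => i j; rewrite !mxE big_distrr /=; apply: eq_bigr => l _; rewrite mxE.
Qed.

Lemma mxtrace_ptrace2 k e (Z : 'M[C]_(k * e)) : \tr (ptrace2 Z) = \tr Z.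
Proof. by rewrite /mxtrace sum_mxtens; apply: eq_bigr => i _; rewrite mxE. Qed.

Lemma mxtrace_ptrace2_mul k e (Z : 'M[C]_(k * e)) (X : 'M[C]_k) :
  \tr (ptrace2 Z *m X) = \tr (Z *m (X *t (1%:M : 'M[C]_e))).
Proof.
rewrite /mxtrace [RHS]sum_mxtens.
have -> : \sum_i \sum_l (Z *m (X *t 1%:M)) (mxtens_index (i, l)) (mxtens_index (i, l))
   = \sum_i \sum_l \sum_j Z (mxtens_index (i, l)) (mxtens_index (j, l)) * X j i.
  apply: eq_bigr => i _; apply: eq_bigr => l _; rewrite mxE sum_mxtens.
  apply: eq_bigr => j _; under eq_bigr do rewrite tensmxE mxE mulrA.
  exact: sum_mul_delta.
apply: eq_bigr => i _; rewrite mxE exchange_big /=; apply: eq_bigr => j _.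
by rewrite mxE big_distrl.
Qed.

Lemma psd_tensmx1 k e (X : 'M[C]_k) : psd X -> psd (X *t (1%:M : 'M[C]_e)).
Proof.
move=> hX v; rewrite quadformE sum_mxtens.
have -> : \sum_i \sum_l \sum_q (v (mxtens_index (i, l)) 0)^* * (X *t 1%:M) (mxtens_index (i, l)) q * v q 0
    = \sum_l \sum_i \sum_j (v (mxtens_index (i, l)) 0)^* * X i j * v (mxtens_index (j, l)) 0.
  rewrite exchange_big /=; apply: eq_bigr => l _; apply: eq_bigr => i _.
  rewrite sum_mxtens; apply: eq_bigr => j _; under eq_bigr do rewrite tensmxE mxE.
  rewrite -(sum_delta_mul (fun l' => (v (mxtens_index (i, l)) 0)^* * X i j * v (mxtens_index (j, l')) 0) l).
  by apply: eq_bigr => l' _ /=; ring.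
apply: sumr_ge0 => l _; have := hX (\col_i v (mxtens_index (i, l)) 0).
by rewrite quadformE; under eq_bigr do under eq_bigr do rewrite !mxE.
Qed.

End PartialTrace.

Lemma poly_interpolation (F : fieldType) (s : seq F) (f : F -> F) :
  exists p : {poly F}, forall x, x \in s -> p.[x] = f x.
Proof.
elim: s => [|x s [p hp]]; first by exists 0.
have [xs|xs] := boolP (x \in s).
  by exists p => y; rewrite inE => /orP[/eqP->|]; exact: hp.
pose q := \prod_(y <- s) ('X - y%:P).
have qx : q.[x] != 0.
  rewrite horner_prod prodf_seq_neq0; apply/allP => y ys /=.
  by rewrite !hornerE subr_eq0; apply: contraNneq xs => ->.
exists (p + ((f x - p.[x]) / q.[x]) *: q) => y; rewrite inE => /orP[/eqP->|ys].
  by rewrite hornerD hornerZ divfK // addrC subrK.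
have qy : q.[y] = 0 by rewrite horner_prod (big_rem y) //= !hornerE subrr mul0r.
by rewrite hornerD hornerZ qy mulr0 addr0 hp.
Qed.

Section FunctionalCalculus.
Variable R : realType.
Local Notation C := R[i].

(* [horner_mx] needs a square size of the form [n.+1]; the sizes below are
   products [n * e]. *)
Definition mx_horner N (p : {poly C}) (A : 'M[C]_N) : 'M[C]_N :=
  \sum_(j < size p) p`_j *: A ^+ j.

Lemma mx_horner_conj m N (U : 'M[C]_(m, N)) (A : 'M[C]_N) p :
  adj U *m U = 1%:M -> U *m adj U = 1%:M ->
  mx_horner p (U *m A *m adj U) = U *m mx_horner p A *m adj U.
Proof.
move=> hUl hUr.
have conjX j : (U *m A *m adj U) ^+ j = U *m A ^+ j *m adj U.
  elim: j => [|j IH]; first by rewrite !expr0 mulmx1 hUr.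
  by rewrite !exprS -!mulmxE IH !mulmxA -[U *m A *m adj U *m U]mulmxA hUl mulmx1.
rewrite /mx_horner mulmx_sumr mulmx_suml; apply: eq_bigr => j _.
by rewrite conjX -scalemxAr -scalemxAl.
Qed.

Lemma mx_horner_diag N (d : 'rV[C]_N) p :
  mx_horner p (diag_mx d) = diag_mx (\row_c p.[d 0 c]).
Proof.
have diagX j : diag_mx d ^+ j = diag_mx (\row_c (d 0 c ^+ j)).
  elim: j => [|j IH]; first by apply/matrixP => a b; rewrite !mxE expr0.
  by rewrite exprS -mulmxE IH mulmx_diag; congr diag_mx; apply/rowP => c; rewrite !mxE exprS.
apply/matrixP => a b; rewrite /mx_horner summxE !mxE horner_coef.
under eq_bigr do rewrite diagX !mxE.
by rewrite -sumrMnl; apply: eq_bigr => j _; rewrite mulrnAr.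
Qed.

Lemma mx_horner_unitary_diag N (V : 'M[C]_N) (d : 'rV[C]_N) p :
  is_unitary_mx V ->
  mx_horner p (V *m diag_mx d *m adj V) = V *m diag_mx (\row_c p.[d 0 c]) *m adj V.
Proof. by move=> [hVr hVl]; rewrite mx_horner_conj // mx_horner_diag. Qed.

End FunctionalCalculus.

Section Spectral.
Variable R : realType.
Local Notation C := R[i].

Lemma herm_unitary_diag n (A : 'M[C]_n) :
  is_herm A -> exists (X : 'M[C]_n) (d : 'rV[C]_n),
    is_unitary_mx X /\ A = X *m diag_mx d *m adj X.
Proof.
move=> hA.
have nA : A \is spectral.normalmx.
  have tA : map_mx Num.conj A^T = A by rewrite -[RHS]hA /adj map_trmx.
  by rewrite qualifE tA.
have := spectral.orthomx_spectralP nA.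
set P := spectral.spectralmx A; set d := spectral.spectral_diag A => hdec.
have hinv : invmx P = adj P.
  by rewrite spectral.invmx_unitary ?spectral.spectral_unitarymx // /adj map_trmx.
have Punit := spectral.spectral_unit A.
exists (adj P), d; rewrite /is_unitary_mx adjmxK -hinv.
by split => //; split; [exact: mulVmx | exact: mulmxV].
Qed.

Lemma mxtrace_unitary_diag n (A V : 'M[C]_n) (d : 'rV[C]_n) :
  \tr (A *m (V *m diag_mx d *m adj V)) = \sum_c (adj V *m A *m V) c c * d 0 c.
Proof.
rewrite !mulmxA mxtrace_mulC !mulmxA mul_mx_diag /mxtrace.
by apply: eq_bigr => c _; rewrite mxE.
Qed.

Lemma mxtrace_unitary_conj n (A V : 'M[C]_n) :
  V *m adj V = 1%:M -> \tr (adj V *m A *m V) = \tr A.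
Proof. by move=> hV; rewrite mxtrace_mulC mulmxA hV mul1mx. Qed.

(* The eigenvalues of a state lie in [0, 1], i.e. [rho <= 1]. *)
Lemma mxtrace_psd_state_le n (Q rho : 'M[C]_n) :
  psd Q -> state rho -> \tr (Q *m rho) <= \tr Q.
Proof.
move=> hQ [hrho trrho].
have [X [d [[hXr hXl] hrhoE]]] := herm_unitary_diag (psd_adj hrho).
have d_ge0 c : 0 <= d 0 c.
  have -> : d 0 c = (adj X *m rho *m X) c c.
    by rewrite hrhoE !mulmxA hXl mul1mx -mulmxA hXl mulmx1 mxE eqxx mulr1n.
  exact/psd_diag_ge0/psd_adj_conj.
have d_le1 c : d 0 c <= 1.
  have : \tr rho = \sum_c d 0 c.
    by rewrite hrhoE -mulmxA mxtrace_mulC -mulmxA hXl mulmx1 mxtrace_diag.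
  rewrite trrho => ->; rewrite (bigD1 c) //= lerDl.
  by apply: sumr_ge0 => j _.
rewrite hrhoE mxtrace_unitary_diag -(mxtrace_unitary_conj Q hXr).
by apply: ler_sum => c _; rewrite ler_piMr //; apply/psd_diag_ge0/psd_adj_conj.
Qed.

End Spectral.

Section GibbsStates.
Variables (R : realType) (beta : R).
Local Notation C := R[i].

Definition gibbs_weights n (E : 'I_n -> R) : 'rV[C]_n :=
  \row_i ((expR (- beta * E i) / \sum_(j < n) expR (- beta * E j))%:C%C).

Lemma sum_expR_gt0 n (E : 'I_n -> R) : (0 < n)%N -> 0 < \sum_j expR (- beta * E j).
Proof.
move=> n_gt0; rewrite (bigD1 (Ordinal n_gt0)) //=.
by rewrite ltr_pwDl ?expR_gt0 // sumr_ge0 // => j _; exact: expR_ge0.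
Qed.

Lemma gibbs_weights_ge0 n (E : 'I_n -> R) c : 0 <= gibbs_weights E 0 c.
Proof.
rewrite mxE lecE /= eqxx /= divr_ge0 ?expR_ge0 //.
by apply: sumr_ge0 => j _; exact: expR_ge0.
Qed.

Lemma sum_gibbs_weights_le1 n (E : 'I_n -> R) : \sum_c gibbs_weights E 0 c <= 1.
Proof.
under eq_bigr do rewrite mxE.
rewrite -rmorph_sum /= -mulr_suml lecE /= eqxx /=.
by have [->|/divff->] := eqVneq (\sum_(j < n) expR (- beta * E j)) 0; rewrite ?mul0r.
Qed.

Lemma gibbs_mxtrace n (K g : 'M[C]_n) : gibbs beta K g -> (0 < n)%N -> \tr g = 1.
Proof.
move=> [V [E [[hVr hVl] [_ ->]]]] n_gt0.
rewrite -mulmxA mxtrace_mulC -mulmxA hVl mulmx1 mxtrace_diag.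
under eq_bigr do rewrite mxE.
by rewrite -rmorph_sum /= -mulr_suml divff // gt_eqF // sum_expR_gt0.
Qed.

Lemma gibbs_unnormalized n (K g : 'M[C]_n) : gibbs beta K g -> (0 < n)%N ->
  exists (V : 'M[C]_n) (E : 'I_n -> R) (c : C),
    [/\ is_unitary_mx V, K = V *m diag_mx (\row_i (E i)%:C%C) *m adj V, c != 0 &
       V *m diag_mx (\row_i (expR (- beta * E i))%:C%C) *m adj V = c *: g].
Proof.
move=> [V [E [hV [hK hg]]]] n_gt0; have S_gt0 := sum_expR_gt0 E n_gt0.
exists V, E, (\sum_j expR (- beta * E j))%:C%C; split => //.
  by rewrite eq_complex /= negb_and gt_eqF.
rewrite hg scalemxAl scalemxAr; congr (_ *m _ *m _).
apply/matrixP => a b; rewrite !mxE mulrnAr -rmorphM /=.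
by rewrite mulrCA divff ?mulr1 // gt_eqF.
Qed.

Lemma mxtrace_mul_gibbs_ge0 n (K g A : 'M[C]_n) :
  psd A -> gibbs beta K g -> 0 <= \tr (A *m g).
Proof.
move=> hA [V [E [_ [_ ->]]]]; rewrite mxtrace_unitary_diag; apply: sumr_ge0 => c _.
by rewrite mulr_ge0 ?gibbs_weights_ge0 //; apply/psd_diag_ge0/psd_adj_conj.
Qed.

(* [g >= lambda_min 1] with [lambda_min > 0] the least Gibbs weight. *)
Lemma gibbs_ge_scalar n (K g : 'M[C]_n) : gibbs beta K g ->
  exists2 m : R, 0 < m & forall Q, psd Q -> m%:C%C * \tr Q <= \tr (Q *m g).
Proof.
move=> [V [E [[hVr _] [_ ->]]]].
pose m := \big[Order.min/1]_c complex.Re (gibbs_weights E 0 c).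
have w_gt0 c : 0 < complex.Re (gibbs_weights E 0 c).
  rewrite mxE /= divr_gt0 ?expR_gt0 //; apply: sum_expR_gt0.
  exact: leq_ltn_trans (ltn_ord c).
exists m => [|Q hQ]; first by apply: lt_bigmin => // c _.
rewrite mxtrace_unitary_diag -(mxtrace_unitary_conj Q hVr) mulr_sumr.
apply: ler_sum => c _; rewrite mulrC ler_wpM2l //; first by apply/psd_diag_ge0/psd_adj_conj.
rewrite mxE lecE /= eqxx /= /m; apply: le_trans (bigmin_le _ c _) _; by rewrite mxE.
Qed.

End GibbsStates.

Section GibbsPreservation.
Variable R : realType.
Local Notation C := R[i].

Lemma tensmx_unitary_diag m n (A : 'M[C]_m) (B : 'M[C]_n) (d1 : 'rV[C]_m) (d2 : 'rV[C]_n) :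
  (A *m diag_mx d1 *m adj A) *t (B *m diag_mx d2 *m adj B)
  = (A *t B) *m diag_mx (\row_p (d1 0 (mxtens_unindex p).1 * d2 0 (mxtens_unindex p).2))
    *m adj (A *t B).
Proof. by rewrite adjmx_tens -tensmx_diag !tensmx_mul. Qed.

Lemma tensmx_add_unitary_diag m n (V : 'M[C]_m) (W : 'M[C]_n) (d1 : 'rV[C]_m) (d2 : 'rV[C]_n) :
  is_unitary_mx V -> is_unitary_mx W ->
  (V *m diag_mx d1 *m adj V) *t (1%:M : 'M[C]_n)
    + (1%:M : 'M[C]_m) *t (W *m diag_mx d2 *m adj W)
  = (V *t W) *m diag_mx (\row_p (d1 0 (mxtens_unindex p).1 + d2 0 (mxtens_unindex p).2))
    *m adj (V *t W).
Proof.
move=> [hV _] [hW _].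
have one_diag k (X : 'M[C]_k) : X *m adj X = 1%:M -> 1%:M = X *m diag_mx (const_mx 1) *m adj X.
  by move=> hX; rewrite diag_const_mx mulmx1.
rewrite {1}(one_diag _ _ hW) {1}(one_diag _ _ hV) !tensmx_unitary_diag -mulmxDl -mulmxDr.
by congr (_ *m _ *m _); apply/matrixP => a b; rewrite !mxE mulr1 mul1r -mulrnDl.
Qed.

(* Interpolating [f] on the joint spectrum by a polynomial reduces this to
   [mx_horner_conj]. *)
Lemma unitary_conj_map_diag m N (U : 'M[C]_(m, N)) (W : 'M[C]_N) (W' : 'M[C]_m)
    (d : 'rV[C]_N) (d' : 'rV[C]_m) (f : C -> C) :
  adj U *m U = 1%:M -> U *m adj U = 1%:M -> is_unitary_mx W -> is_unitary_mx W' ->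
  U *m (W *m diag_mx d *m adj W) *m adj U = W' *m diag_mx d' *m adj W' ->
  U *m (W *m diag_mx (map_mx f d) *m adj W) *m adj U
  = W' *m diag_mx (map_mx f d') *m adj W'.
Proof.
move=> hUl hUr hW hW' hUT.
have [p hp] := poly_interpolation
  ([seq d 0 c | c <- enum 'I_N] ++ [seq d' 0 c | c <- enum 'I_m]) f.
have map_d : map_mx f d = \row_c p.[d 0 c].
  apply/rowP => c; rewrite !mxE hp // mem_cat; apply/orP; left.
  by apply: map_f; rewrite mem_enum.
have map_d' : map_mx f d' = \row_c p.[d' 0 c].
  apply/rowP => c; rewrite !mxE hp // mem_cat; apply/orP; right.
  by apply: map_f; rewrite mem_enum.
by rewrite map_d map_d' -!mx_horner_unitary_diag // -mx_horner_conj // hUT.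
Qed.

Variable beta : R.

Lemma energy_preserving_gibbs_ptrace n k e e' (H g : 'M[C]_n) (Ht gt : 'M[C]_k)
    (HE gE : 'M[C]_e) (HE' : 'M[C]_e') (U : 'M[C]_(k * e', n * e)) :
  (0 < n)%N -> (0 < e)%N -> (0 < k)%N ->
  gibbs beta H g -> gibbs beta Ht gt -> gibbs beta HE gE -> is_herm HE' ->
  U *m adj U = 1%:M -> adj U *m U = 1%:M ->
  U *m (H *t (1%:M : 'M[C]_e) + (1%:M : 'M[C]_n) *t HE)
    = (Ht *t (1%:M : 'M[C]_e') + (1%:M : 'M[C]_k) *t HE') *m U ->
  exists lam : C, ptrace2 (U *m (g *t gE) *m adj U) = lam *: gt.
Proof.
move=> n_gt0 e_gt0 k_gt0 hg hgt hgE hHE' hUr hUl hcomm.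
have [V [E [c [hV hH c_neq0 hc]]]] := gibbs_unnormalized hg n_gt0.
have [W [F [cE [hW hHE cE_neq0 hcE]]]] := gibbs_unnormalized hgE e_gt0.
have [Vt [Et [ct [hVt hHt _ hct]]]] := gibbs_unnormalized hgt k_gt0.
have [X [sp [hX hHE'E]]] := herm_unitary_diag hHE'.
pose f (z : C) := (expR (- beta * complex.Re z))%:C%C.
have hUT : U *m (H *t 1%:M + 1%:M *t HE) *m adj U = Ht *t 1%:M + 1%:M *t HE'.
  by rewrite hcomm -mulmxA hUr mulmx1.
rewrite hH hHE hHt hHE'E !tensmx_add_unitary_diag // in hUT.
have := unitary_conj_map_diag f hUl hUr (unitary_tens hV hW) (unitary_tens hVt hX) hUT.
have mapE m' n' (a : 'I_m' -> R) (d2 : 'rV[C]_n') :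
    map_mx f (\row_p ((\row_i (a i)%:C%C) 0 (mxtens_unindex p).1 + d2 0 (mxtens_unindex p).2))
    = \row_p ((\row_i (expR (- beta * a i))%:C%C) 0 (mxtens_unindex p).1
               * (map_mx f d2) 0 (mxtens_unindex p).2).
  apply/rowP => p; rewrite !mxE /f; case: (d2 0 _) => x y /=.
  by rewrite mulrDr expRD rmorphM.
rewrite !mapE -!tensmx_unitary_diag hc hct.
have -> : map_mx f (\row_i (F i)%:C%C) = \row_i (expR (- beta * F i))%:C%C.
  by apply/rowP => l; rewrite !mxE.
rewrite hcE tensmxZ -scalemxAr -scalemxAl => hUg.
exists ((c * cE)^-1 * (\tr (X *m diag_mx (map_mx f sp) *m adj X) * ct)).
have -> : U *m (g *t gE) *m adj U = (c * cE)^-1 *: ((c * cE) *: (U *m (g *t gE) *m adj U)).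
  by rewrite scalerA mulVf ?mulf_neq0 // scale1r.
by rewrite hUg ptrace2Z ptrace2_tens !scalerA mulrA.
Qed.

(* The alternative [Ch g = 0] only arises for an environment of dimension 0,
   which [thermal_op] does not exclude. *)
Lemma thermal_op_gibbs n k (H g : 'M[C]_n) (Ht gt : 'M[C]_k) (Ch : 'M[C]_n -> 'M[C]_k) :
  (0 < n)%N -> gibbs beta H g -> gibbs beta Ht gt -> thermal_op beta H Ht Ch ->
  Ch g = gt \/ Ch g = 0.
Proof.
move=> n_gt0 hg hgt [e [e' [HE [gE [HE' [U [hHE [hHE' [hgE [hUr [hUl [hcomm ->]]]]]]]]]]]].
have [k0|k_gt0] := posnP k.
  by left; apply/matrixP => i j; have := ltn_ord i; rewrite {2}k0.
have [e'0|e'_gt0] := posnP e'.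
  right; apply/matrixP => i j; rewrite !mxE big1 // => l _.
  by have := ltn_ord l; rewrite {2}e'0.
have [e0|e_gt0] := posnP e.
  have ke'_gt0 : (0 < k * e')%N by rewrite muln_gt0 k_gt0.
  have := congr1 (fun Z : 'M[C]_(k * e') => Z (Ordinal ke'_gt0) (Ordinal ke'_gt0)) hUr.
  rewrite /= !mxE eqxx sum_mxtens big1 => [/eqP|i _]; first by rewrite eq_sym oner_eq0.
  by apply: big1 => l _; have := ltn_ord l; rewrite {2}e0.
left; have [lam hlam] := energy_preserving_gibbs_ptrace n_gt0 e_gt0 k_gt0 hg hgt hgE hHE' hUr hUl hcomm.
have : \tr (ptrace2 (U *m (g *t gE) *m adj U)) = 1.
  rewrite mxtrace_ptrace2 mxtrace_mulC mulmxA hUl mul1mx mxtrace_tens.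
  by rewrite (gibbs_mxtrace hg n_gt0) (gibbs_mxtrace hgE e_gt0) mulr1.
by rewrite hlam mxtraceZ (gibbs_mxtrace hgt k_gt0) mulr1 => ->; rewrite scale1r.
Qed.

End GibbsPreservation.

Section HeisenbergPicture.
Variable R : realType.
Local Notation C := R[i].

(* The isometry [v |-> v (x) w_b] for the [b]-th column [w_b] of [W], i.e.
   [1%:M *t col b W] without the cast along [n * 1 = n]. *)
Definition tens_col n e (W : 'M[C]_e) (b : 'I_e) : 'M[C]_(n * e, n) :=
  \matrix_(p, c) (((mxtens_unindex p).1 == c)%:R * W (mxtens_unindex p).2 b).

Lemma tens_col_mul n e m (W : 'M[C]_e) b (A : 'M[C]_(n, m)) i l d :
  (tens_col n W b *m A) (mxtens_index (i, l)) d = W l b * A i d.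
Proof.
rewrite mxE; under eq_bigr do rewrite mxE mxtens_indexK /= -mulrA.
exact: sum_delta_mul.
Qed.

Lemma mul_adj_tens_col n e m (W : 'M[C]_e) b (A : 'M[C]_(m, n)) x j l :
  (A *m adj (tens_col n W b)) x (mxtens_index (j, l)) = A x j * (W l b)^*.
Proof.
rewrite mxE; under eq_bigr do rewrite adjmxE mxE mxtens_indexK /= rmorphM rmorph_nat mulrA.
rewrite -(sum_mul_delta (fun i => A x i * (W l b)^*) j).
by apply: eq_bigr => i _; rewrite eq_sym; ring.
Qed.

Lemma tens_col_isometry n e (W : 'M[C]_e) b :
  adj W *m W = 1%:M -> adj (tens_col n W b) *m tens_col n W b = 1%:M.
Proof.
move=> hW; apply/matrixP => c d; rewrite mxE sum_mxtens.
have normb : \sum_l (W l b)^* * W l b = 1.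
  have : (adj W *m W) b b = 1 by rewrite hW mxE eqxx.
  by rewrite mxE => <-; apply: eq_bigr => l _; rewrite adjmxE.
under eq_bigr do under eq_bigr do rewrite adjmxE !mxE mxtens_indexK /= rmorphM rmorph_nat.
transitivity (\sum_i (i == c)%:R * ((i == d)%:R * \sum_l (W l b)^* * W l b)).
  by apply: eq_bigr => i _; rewrite !big_distrr; apply: eq_bigr => l _ /=; ring.
under eq_bigr do rewrite eq_sym.
by rewrite sum_delta_mul normb mulr1 mxE.
Qed.

Lemma tensmx_unitary_diag_sum n e (W : 'M[C]_e) (d : 'rV[C]_e) (s : 'M[C]_n) :
  s *t (W *m diag_mx d *m adj W)
  = \sum_b d 0 b *: (tens_col n W b *m s *m adj (tens_col n W b)).
Proof.
apply/matrixP => p q.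
case: (mxtens_indexP p) => i l; case: (mxtens_indexP q) => j l'.
rewrite tensmxE summxE.
under [RHS]eq_bigr do rewrite mxE mul_adj_tens_col tens_col_mul.
rewrite mxE big_distrr /=; apply: eq_bigr => b _.
by rewrite adjmxE mul_mx_diag !mxE; ring.
Qed.

Definition thermal_dual n e k e' (U : 'M[C]_(k * e', n * e)) (W : 'M[C]_e)
    (d : 'rV[C]_e) (X : 'M[C]_k) : 'M[C]_n :=
  \sum_b d 0 b *: (adj (tens_col n W b) *m (adj U *m (X *t (1%:M : 'M[C]_e')) *m U)
                    *m tens_col n W b).

Section Dual.
Variables (n e k e' : nat) (U : 'M[C]_(k * e', n * e)) (W : 'M[C]_e) (d : 'rV[C]_e).

Lemma mxtrace_thermal_dual (s : 'M[C]_n) (X : 'M[C]_k) :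
  \tr (ptrace2 (U *m (s *t (W *m diag_mx d *m adj W)) *m adj U) *m X)
  = \tr (s *m thermal_dual U W d X).
Proof.
rewrite mxtrace_ptrace2_mul -!mulmxA mxtrace_mulC !mulmxA tensmx_unitary_diag_sum.
rewrite /thermal_dual mulmx_sumr !mulmx_suml !raddf_sum; apply: eq_bigr => b _.
rewrite /= -!scalemxAl -scalemxAr !mxtraceZ; congr (_ * _).
by rewrite -!mulmxA mxtrace_mulC !mulmxA.
Qed.

Lemma psd_thermal_dual (X : 'M[C]_k) :
  (forall b, 0 <= d 0 b) -> psd X -> psd (thermal_dual U W d X).
Proof.
move=> d_ge0 hX; apply: psd_sum => b _; apply: psdZ => //.
by do 2 apply: psd_adj_conj; exact: psd_tensmx1.
Qed.

Lemma thermal_dualB (A B : 'M[C]_k) :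
  thermal_dual U W d (A - B) = thermal_dual U W d A - thermal_dual U W d B.
Proof.
rewrite /thermal_dual -sumrB; apply: eq_bigr => b _.
by rewrite tensmxBl mulmxBr mulmxBl mulmxBr mulmxBl scalerBr.
Qed.

Lemma thermal_dual1 : adj U *m U = 1%:M -> adj W *m W = 1%:M ->
  thermal_dual U W d 1%:M = (\sum_b d 0 b) *: 1%:M.
Proof.
move=> hU hW; rewrite /thermal_dual tensmx11 mulmx1 hU scaler_suml.
by apply: eq_bigr => b _; rewrite mulmx1 tens_col_isometry.
Qed.

Lemma effect_thermal_dual (X : 'M[C]_k) :
  adj U *m U = 1%:M -> adj W *m W = 1%:M ->
  (forall b, 0 <= d 0 b) -> \sum_b d 0 b <= 1 ->
  effect X -> effect (thermal_dual U W d X).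
Proof.
move=> hU hW d_ge0 d_le1 [hX hX1]; split; first exact: psd_thermal_dual.
have -> : 1%:M - thermal_dual U W d X
    = (1 - \sum_b d 0 b) *: 1%:M + thermal_dual U W d (1%:M - X).
  by rewrite thermal_dualB thermal_dual1 // scalerBl scale1r addrA subrK.
by apply: psdD; [apply: psdZ; [rewrite subr_ge0 | exact: psd1] | exact: psd_thermal_dual].
Qed.

End Dual.

Lemma thermal_op_dual_effect (beta : R) n k (H : 'M[C]_n) (Ht : 'M[C]_k)
    (Ch : 'M[C]_n -> 'M[C]_k) (X : 'M[C]_k) :
  thermal_op beta H Ht Ch -> effect X ->
  exists2 Y, effect Y & forall s, \tr (Ch s *m X) = \tr (Y *m s).
Proof.
move=> [e [e' [HE [gE [HE' [U [_ [_ [hgE [_ [hU [_ hCh]]]]]]]]]]]] hX.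
case: hgE => [W [F [[_ hW] [_ hgE]]]].
exists (thermal_dual U W (gibbs_weights beta F) X).
  apply: effect_thermal_dual => //; [exact: gibbs_weights_ge0 | exact: sum_gibbs_weights_le1].
by move=> s; rewrite hCh hgE mxtrace_thermal_dual mxtrace_mulC.
Qed.

End HeisenbergPicture.

Section Testing.
Variables (R : realType) (beta : R).
Local Notation C := R[i].

Lemma state_dim_gt0 n (rho : 'M[C]_n) : state rho -> (0 < n)%N.
Proof.
case=> _ tr1; rewrite lt0n; apply/eqP => n0; move: tr1.
rewrite /mxtrace big1 => [/eqP|i _]; first by rewrite eq_sym oner_eq0.
by have := ltn_ord i; rewrite {2}n0.
Qed.

Lemma povm_effect k M (Pi : 'I_M -> 'M[C]_k) i : povm Pi -> effect (Pi i).
Proof.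
case=> Pi_psd sumPi; split => //.
by rewrite -sumPi (bigD1 i) //= addrC addrK; apply: psd_sum.
Qed.

Lemma effect_mean n M (Y : 'I_M -> 'M[C]_n) :
  (0 < M)%N -> (forall i, effect (Y i)) -> effect (M%:R^-1 *: \sum_i Y i).
Proof.
move=> M_gt0 hY; have M_neq0 : M%:R != 0 :> C by rewrite pnatr_eq0 -lt0n.
have invM_ge0 : 0 <= M%:R^-1 :> C by rewrite invr_ge0 ler0n.
split; first by apply: psdZ => //; apply: psd_sum => i _; case: (hY i).
have -> : 1%:M - M%:R^-1 *: \sum_i Y i = M%:R^-1 *: \sum_i (1%:M - Y i).
  rewrite sumrB sumr_const card_ord scalerBr; congr (_ - _).
  by rewrite -[1%:M *+ M]scaler_nat scalerA mulVf // scale1r.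
by apply: psdZ => //; apply: psd_sum => i _; case: (hY i).
Qed.

(* [Q] is the average of the Heisenberg-picture effects [E_i^dagger (Pi_i)]. *)
Lemma thermal_ops_povm_test n k (H : 'M[C]_n) (Ht : 'M[C]_k) M
    (Ch : 'I_M -> 'M[C]_n -> 'M[C]_k) (Pi : 'I_M -> 'M[C]_k) :
  (0 < M)%N -> (forall i, thermal_op beta H Ht (Ch i)) -> povm Pi ->
  exists2 Q, effect Q &
    forall s, \tr (Q *m s) = M%:R^-1 * \sum_i \tr (Ch i s *m Pi i).
Proof.
move=> M_gt0 hCh hPi.
have /fin_all_exists2[Y Y_eff hY] i := thermal_op_dual_effect (hCh i) (povm_effect i hPi).
exists (M%:R^-1 *: \sum_i Y i); first exact: effect_mean.
move=> s; rewrite -scalemxAl mxtraceZ mulmx_suml raddf_sum /=.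
by congr (_ * _); apply: eq_bigr => i _; rewrite hY.
Qed.

Lemma sum_mxtrace_thermal_gibbs_povm n k (H gamma : 'M[C]_n) (Ht gammat : 'M[C]_k) M
    (Ch : 'I_M -> 'M[C]_n -> 'M[C]_k) (Pi : 'I_M -> 'M[C]_k) :
  (0 < n)%N -> gibbs beta H gamma -> gibbs beta Ht gammat ->
  (forall i, thermal_op beta H Ht (Ch i)) -> povm Pi ->
  \sum_i \tr (Ch i gamma *m Pi i) <= 1.
Proof.
move=> n_gt0 hgamma hgammat hCh [Pi_psd sumPi].
apply: (@le_trans _ _ (\tr (gammat *m \sum_i Pi i))).
  rewrite mulmx_sumr raddf_sum /=; apply: ler_sum => i _.
  have [->|->] := thermal_op_gibbs n_gt0 hgamma hgammat (hCh i); first by [].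
  by rewrite mul0mx mxtrace0 mxtrace_mulC (mxtrace_mul_gibbs_ge0 (Pi_psd i) hgammat).
rewrite sumPi mulmx1; have [k0|k_gt0] := posnP k; last by rewrite (gibbs_mxtrace hgammat).
by rewrite /mxtrace big1 ?ler01 // => i; have := ltn_ord i; rewrite {2}k0.
Qed.

(* The infimum in [DH] is positive, since [m tr(Q rho) <= m tr Q <= tr(Q gamma)]
   for the least Gibbs weight [m > 0]; hence [ln] is monotone on it. *)
Lemma ln_le_DH n (H gamma rho Q : 'M[C]_n) (eps x : R) :
  gibbs beta H gamma -> state rho -> eps < 1 ->
  effect Q -> (1 - eps)%:C%C <= \tr (Q *m rho) ->
  0 < x -> \tr (Q *m gamma) <= (x^-1)%:C%C -> ln x <= DH eps rho gamma.
Proof.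
move=> hgamma hrho eps_lt1 hQ hQrho x_gt0 hQgamma.
have [m m_gt0 hm] := gibbs_ge_scalar hgamma.
rewrite /DH; set S := (X in inf X).
have S_lb y : S y -> m * (1 - eps) <= y.
  move=> [Q' [[hQ' _] [hQ'rho ->]]].
  suff : (m * (1 - eps))%:C%C <= \tr (Q' *m gamma) by rewrite lecE => /andP[].
  apply: le_trans (hm _ hQ'); rewrite rmorphM; apply: ler_wpM2l; first by rewrite lecR ltW.
  exact: le_trans hQ'rho (mxtrace_psd_state_le hQ' hrho).
have SQ : S (complex.Re (\tr (Q *m gamma))) by exists Q.
have infS_gt0 : 0 < inf S.
  apply: lt_le_trans (lb_le_inf _ S_lb); last by exists (complex.Re (\tr (Q *m gamma))).
  by rewrite mulr_gt0 // subr_gt0.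
have infS_le : inf S <= x^-1.
  apply: le_trans (ge_inf _ SQ) _; first by exists (m * (1 - eps)).
  by move: hQgamma; rewrite lecE => /andP[].
rewrite -[ln x]opprK lerN2 -lnV ?posrE //.
by rewrite ler_ln ?posrE ?invr_gt0.
Qed.

End Testing.

Theorem mainTheorem7 (R : realType) (beta : R) (hbeta : 0 < beta)
    (n : nat) (H gamma rho : 'M[R[i]]_n)
    (hH : is_herm H) (hgamma : gibbs beta H gamma) (hrho : state rho)
    (eps : R) (heps0 : 0 <= eps) (heps1 : eps < 1)
    (k : nat) (Ht gammat : 'M[R[i]]_k)
    (hHt : is_herm Ht) (hgammat : gibbs beta Ht gammat)
    (M : nat) (Ch : 'I_M -> 'M[R[i]]_n -> 'M[R[i]]_k)
    (hCh : forall i, thermal_op beta H Ht (Ch i))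
    (Pi : 'I_M -> 'M[R[i]]_k) (hPi : povm Pi)
    (hsucc : ((1 - eps)%:C%C <= (M%:R)^-1 * \sum_(i < M) \tr (Ch i rho *m Pi i))) :
  ln (M%:R : R) <= DH eps rho gamma.
Proof.
have n_gt0 := state_dim_gt0 hrho.
have M_gt0 : (0 < M)%N.
  rewrite lt0n; apply/eqP => M0; move: hsucc.
  by rewrite [in M%:R]M0 invr0 mul0r lecE /= subr_le0 leNgt heps1 andbF.
have [Q hQ trQ] := thermal_ops_povm_test M_gt0 hCh hPi.
apply: (ln_le_DH hgamma hrho heps1 hQ); rewrite ?trQ ?ltr0n //.
rewrite -[X in _ <= X]mulr1 fmorphV rmorph_nat ler_wpM2l ?invr_ge0 ?ler0n //.
exact: sum_mxtrace_thermal_gibbs_povm hgamma hgammat hCh hPi.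
Qed.
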